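(* Let $FO_{j,2}(\alpha,\lambda,n)$ be the number of partitions with perimeter $n$, largest part $\alpha$, exactly $\lambda$ parts, and exactly $j$ distinct even part sizes. Then, as formal power series, $$\sum_{\alpha,\lambda,n\geq 1}\sum_{j\geq 0} FO_{j,2}(\alpha,\lambda,n)\,x^\alpha y^\lambda z^j q^n=\frac{xyq\,(1-(y-xz)q)}{1-2yq+(y^2-x^2)q^2+(1-z)x^2yq^3}.$$
   Context: A partition is a finite nonincreasing sequence of positive integers (its parts); its size is not fixed. For a partition $\pi$ with largest part $\alpha(\pi)$ and number of parts $\lambda(\pi)$, its perimeter is $\alpha(\pi)+\lambda(\pi)-1$. (Note $FO_{j,2}(\alpha,\lambda,n)=0$ unless $n=\alpha+\lambda-1$.) *)

From mathcomp Require Import all_boot all_order all_algebra.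
Set Implicit Arguments. Unset Strict Implicit. Unset Printing Implicit Defensive.
Import GRing.Theory Num.Theory.

Definition is_partition (s : seq nat) : bool :=
  sorted geq s && all (fun k => 0 < k) s.
Definition largest_part (s : seq nat) : nat := \max_(k <- s) k.
Definition num_parts (s : seq nat) : nat := size s.
Definition perimeter (s : seq nat) : nat := largest_part s + num_parts s - 1.
Definition num_even_sizes (s : seq nat) : nat :=
  size (undup (filter (fun k => ~~ odd k) s)).

(* A partition with largest
   part a and l parts is exactly (the image under val of) an l-tuple over
   'I_a.+1 satisfying the conditions; map val is injective. *)
Definition FO2 (j a l n : nat) : nat :=
  #|[pred t : l.-tuple 'I_a.+1 |
      let s := map val t in
      [&& is_partition s, largest_part s == a, perimeter s == n
        & num_even_sizes s == j]]|.

Local Open Scope ring_scope.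

(* Formal power series in x, y, z, q with integer coefficients:
   f a b c d = coefficient of x^a y^b z^c q^d. *)
Definition fps := nat -> nat -> nat -> nat -> int.

Definition fps_add (f g : fps) : fps := fun a b c d => f a b c d + g a b c d.

Definition fps_mul (f g : fps) : fps := fun a b c d =>
  \sum_(i < a.+1) \sum_(k < b.+1) \sum_(m < c.+1) \sum_(p < d.+1)
     f i k m p * g (a - i)%N (b - k)%N (c - m)%N (d - p)%N.

Definition mono (e : int) (i k m p : nat) : fps := fun a b c d =>
  if [&& a == i, b == k, c == m & d == p] then e else 0.

Definition fps_one : fps := mono 1 0 0 0 0.

Definition FO2_gf : fps := fun a l j n =>
  if [&& (0 < a)%N, (0 < l)%N & (0 < n)%N] then (FO2 j a l n)%:Z else 0.

(* numerator  x y q (1 - (y - x z) q) = xyq - x y^2 q^2 + x^2 y z q^2 *)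
Definition num_FO2 : fps :=
  fps_add (mono 1 1 1 0 1) (fps_add (mono (-1) 1 2 0 2) (mono 1 2 1 1 2)).

(* denominator 1 - 2yq + (y^2 - x^2) q^2 + (1 - z) x^2 y q^3 *)
Definition den_FO2 : fps :=
  fps_add (mono 1 0 0 0 0)
  (fps_add (mono (-2) 0 1 0 1)
  (fps_add (mono 1 0 2 0 2)
  (fps_add (mono (-1) 2 0 0 2)
  (fps_add (mono 1 2 1 0 3) (mono (-1) 2 1 1 3))))).

From mathcomp Require Import all_boot all_order all_algebra.
From mathcomp Require Import zify.
From Stdlib Require Import FunctionalExtensionality.
Set Implicit Arguments. Unset Strict Implicit. Unset Printing Implicit Defensive.
Import Order.TTheory GRing.Theory Num.Theory.

(* Every monomial of the numerator and of the denominator has q-degree equal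
   to its x-degree plus its y-degree (minus one for the numerator), and so do
   the partitions counted on the left (the perimeter is a + l - 1).  Hence all
   series involved are arrays over (a, l, j) placed on a plane in q, and
   multiplication by the denominator is the linear recurrence operator
   [mul_den].

   Let P_m = [bounded_count m] (resp. E_m = [exact_count m]) count the
   partitions with all parts at most m (resp. largest part m) by number of
   parts (y) and number of even part sizes (z).
   Removing the first part gives P_m = P_(m-1) + E_m and
   (1 - y) E_m = y z^[m even] P_(m-1); as consecutive m have opposite parity,
   (1 - y)^2 P_m = (1 - y + yz) P_(m-2) for m >= 2.  Therefore E satisfies the
   recurrence [mul_den] with the numerator as source term (the cases a <= 2
   being checked by hand).  The inverse of the denominator is constructed by
   recursion on a + l, and the recurrence has at most one solution vanishing
   for negative a or l, which identifies E with numerator * inverse. *)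

Lemma is_partition_cons h t :
  is_partition (h :: t) = [&& 0 < h, head 0 t <= h & is_partition t].
Proof.
rewrite /is_partition /=; case: t => [|x t] /=; first by rewrite !andbT.
by rewrite -!andbA; do 2!bool_congr.
Qed.

Lemma largest_part_head s : is_partition s -> largest_part s = head 0 s.
Proof.
rewrite /largest_part; elim: s => [|h t IH]; first by rewrite big_nil.
rewrite is_partition_cons big_cons => /and3P [_ th /IH ->].
exact/maxn_idPl.
Qed.

Lemma part_le_head s x : is_partition s -> x \in s -> x <= head 0 s.
Proof.
elim: s => [|h t IH] //; rewrite is_partition_cons inE => /and3P [_ th pt].
by case/orP => [/eqP -> //|/(IH pt) /leq_trans]; apply.
Qed.

Lemma num_even_sizes_cons_mem x s :
  x \in s -> num_even_sizes (x :: s) = num_even_sizes s.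
Proof.
rewrite /num_even_sizes /=; case: ifP => //= ox xs.
by rewrite mem_filter ox xs.
Qed.

Lemma num_even_sizes_cons_notin x s :
  x \notin s -> num_even_sizes (x :: s) = num_even_sizes s + ~~ odd x.
Proof.
rewrite /num_even_sizes /=; case: ifP => /= ox xs; last by rewrite addn0.
by rewrite mem_filter ox (negbTE xs) addn1.
Qed.

Fixpoint top_parts (M : nat) (below : nat -> seq (seq nat)) (l : nat)
    : seq (seq nat) :=
  if l is l'.+1 then map (cons M) (top_parts M below l' ++ below l') else [::].

Fixpoint bounded_parts (m : nat) : nat -> seq (seq nat) :=
  if m is m'.+1 then fun l => bounded_parts m' l ++ top_parts m (bounded_parts m') l
  else fun l => if l is 0 then [:: [::]] else [::].

Definition exact_parts (a l : nat) : seq (seq nat) :=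
  if a is m.+1 then top_parts a (bounded_parts m) l else [::].

Lemma mem_top_parts m below l s :
  (forall l s, (s \in below l) = [&& is_partition s, head 0 s <= m & size s == l]) ->
  (s \in top_parts m.+1 below l) =
    [&& is_partition s, head 0 s == m.+1 & size s == l].
Proof.
move=> mem_below; elim: l s => [|l IH] s.
  by case: s => [|h t]; rewrite [top_parts _ _ _]/= in_nil /= ?andbF.
rewrite [top_parts _ _ _]/=; case: s => [|h t]; first by apply/mapP => -[].
case: (eqVneq h m.+1) => [->|hM]; last first.
  by rewrite andbF; apply/mapP => -[u _ [hE _]]; rewrite hE eqxx in hM.
rewrite mem_map; last by move=> u v [].
rewrite mem_cat IH mem_below is_partition_cons ltn0Sn /= eqSS.
rewrite [_ <= m.+1]leq_eqVlt ltnS.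
by case: (is_partition t) (size t == l) => [] []; rewrite /= ?andbT ?andbF.
Qed.

Lemma mem_bounded_parts m l s :
  (s \in bounded_parts m l) = [&& is_partition s, head 0 s <= m & size s == l].
Proof.
elim: m l s => [|m IH] l s /=.
  case: s => [|h t]; first by case: l.
  by rewrite is_partition_cons; case: h => [|h]; case: l => [|l]; rewrite /= ?andbF ?inE.
rewrite mem_cat IH (mem_top_parts _ _ IH) [_ <= m.+1]leq_eqVlt ltnS.
by case: (is_partition s) (size s == l) => [] []; rewrite /= ?andbT ?andbF // orbC.
Qed.

Lemma mem_exact_parts m l s :
  (s \in exact_parts m.+1 l) = [&& is_partition s, head 0 s == m.+1 & size s == l].
Proof. exact/mem_top_parts/mem_bounded_parts. Qed.

Lemma uniq_bounded_parts m l : uniq (bounded_parts m l).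
Proof.
elim: m l => [|m IH] l /=; first by case: l.
have uniq_top l' : uniq (exact_parts m.+1 l').
  elim: l' => //= l' IHl; rewrite map_inj_uniq; last by move=> u v [].
  rewrite cat_uniq IHl IH andbT /=; apply/hasP => -[s].
  rewrite mem_bounded_parts mem_exact_parts => /and3P [_ sm _] /and3P [_ /eqP sM _].
  by rewrite sM ltnn in sm.
rewrite cat_uniq IH uniq_top andbT; apply/hasP => -[s].
rewrite mem_exact_parts mem_bounded_parts => /and3P [_ /eqP sM _] /and3P [_ sm _].
by rewrite sM ltnn in sm.
Qed.

Lemma uniq_exact_parts a l : uniq (exact_parts a l).
Proof.
case: a => // m; have := uniq_bounded_parts m.+1 l.
by rewrite [bounded_parts _ _]/= cat_uniq => /and3P [].
Qed.

Definition bounded_count (m l j : nat) : nat :=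
  count (fun s => num_even_sizes s == j) (bounded_parts m l).

Definition exact_count (a l j : nat) : nat :=
  count (fun s => num_even_sizes s == j) (exact_parts a l).

Lemma bounded_count0 l j : bounded_count 0 l j = ((l == 0) && (j == 0)).
Proof. by case: l => [|l] //; case: j. Qed.

Lemma bounded_countS m l j :
  bounded_count m.+1 l j = bounded_count m l j + exact_count m.+1 l j.
Proof. exact: count_cat. Qed.

Lemma exact_countS m l j :
  exact_count m.+1 l.+1 j = exact_count m.+1 l j +
    count (fun s => num_even_sizes s + ~~ odd m.+1 == j) (bounded_parts m l).
Proof.
rewrite /exact_count [exact_parts _ _]/= count_map count_cat.
congr (_ + _); apply: eq_in_count => s.
  rewrite mem_exact_parts => /and3P [_ /eqP hs _] /=.
  by rewrite num_even_sizes_cons_mem //; case: s hs => //= h t ->; rewrite mem_head.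
rewrite mem_bounded_parts => /and3P [ps hs _] /=.
rewrite num_even_sizes_cons_notin //; apply/negP => /(part_le_head ps).
by rewrite leqNgt ltnS hs.
Qed.

Definition tuple_vals (n l : nat) : seq (seq nat) :=
  [seq map val (tval t) | t <- enum (l.-tuple 'I_n : finType)].

Lemma card_tuple_vals n l (P : pred (seq nat)) :
  #|[pred t : l.-tuple 'I_n | P (map val t)]| = count P (tuple_vals n l).
Proof. by rewrite cardE /enum_mem size_filter /tuple_vals count_map enumT. Qed.

Lemma uniq_tuple_vals n l : uniq (tuple_vals n l).
Proof. by rewrite map_inj_uniq ?enum_uniq // => t u /(inj_map val_inj) /val_inj. Qed.

Lemma mem_tuple_vals n l s :
  (s \in tuple_vals n.+1 l) = (size s == l) && all (fun k => k < n.+1) s.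
Proof.
apply/mapP/andP => [[t _ ->]|[/eqP size_s all_s]].
  rewrite size_map size_tuple; split=> //.
  by apply/allP => _ /mapP [i _ ->]; apply: ltn_ord.
have size_s' : size (map (@inord n) s) == l by rewrite size_map size_s.
exists (Tuple size_s'); first by rewrite mem_enum.
by rewrite /= -map_comp map_id_in // => k /(allP all_s) /= /inordK.
Qed.

Lemma perm_tuple_vals_exact_parts a l :
  perm_eq [seq s <- tuple_vals a.+2 l | is_partition s && (largest_part s == a.+1)]
          (exact_parts a.+1 l).
Proof.
apply: uniq_perm; rewrite ?filter_uniq ?uniq_tuple_vals ?uniq_exact_parts // => s.
rewrite mem_filter mem_tuple_vals mem_exact_parts.
case ps: (is_partition s) => //=; rewrite largest_part_head //.
case: (eqVneq (head 0 s) a.+1) => //= hs.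
rewrite [all _ _](_ : _ = true) ?andbT //.
by apply/allP => k /(part_le_head ps); rewrite hs ltnS.
Qed.

Lemma perimeter_exact_parts a l s : s \in exact_parts a.+1 l -> perimeter s = a + l.
Proof.
rewrite mem_exact_parts => /and3P [ps /eqP hs /eqP ls].
by rewrite /perimeter /num_parts largest_part_head // hs ls addSn subn1.
Qed.

Lemma FO2_exact_count a l j n :
  FO2 j a.+1 l n = if n == a + l then exact_count a.+1 l j else 0.
Proof.
rewrite /FO2 (card_tuple_vals _ _ (fun s => [&& is_partition s, largest_part s == a.+1,
                                              perimeter s == n & num_even_sizes s == j])).
rewrite (eq_count (a2 := predI (fun s => (perimeter s == n) && (num_even_sizes s == j))
                               (fun s => is_partition s && (largest_part s == a.+1)))); last first.
  by move=> s /=; rewrite [RHS]andbC -!andbA.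
rewrite -count_filter (permP (perm_tuple_vals_exact_parts a l)) /exact_count.
case: eqP => [->|/eqP ne].
  by apply: eq_in_count => s /perimeter_exact_parts ->; rewrite eqxx.
rewrite (eq_in_count (a2 := pred0)) ?count_pred0 // => s /perimeter_exact_parts ->.
by rewrite eq_sym (negbTE ne).
Qed.

Local Open Scope ring_scope.

Lemma subz11 (x : int) : x - 1 - 1 = x - 2. Proof. lia. Qed.
Lemma subz12 (x : int) : x - 1 - 2 = x - 3. Proof. lia. Qed.
Lemma subz21 (x : int) : x - 2 - 1 = x - 3. Proof. lia. Qed.
Lemma subz22 (x : int) : x - 2 - 2 = x - 4. Proof. lia. Qed.

(* Arguments such as [a - 1] elaborated in different contexts may carry
   different (convertible) canonical-structure paths, which [lia] treats as
   distinct atoms; [set] identifies them up to conversion. *)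
Ltac abstract_atoms f :=
  repeat match goal with
  | |- context [f ?x ?y ?z] => let v := fresh "v" in set v := f x y z; clearbody v
  end.

Definition zero_ext (f : nat -> nat -> nat -> nat) (a l j : int) : int :=
  match a, l, j with Posz a, Posz l, Posz j => (f a l j)%:Z | _, _, _ => 0 end.

Definition exactz : int -> int -> int -> int := zero_ext exact_count.
Definition boundedz : int -> int -> int -> int := zero_ext bounded_count.

Definition deltaz : int -> int -> int -> int :=
  zero_ext (fun a l j => [&& a == 0, l == 0 & j == 0]%N).

Definition evenz (a : int) : int := if odd `|a| then 0 else 1.

Lemma evenz01 a : evenz a = 0 \/ evenz a = 1.
Proof. by rewrite /evenz; case: ifP; [left|right]. Qed.

Lemma zero_ext_neg f a l j : a < 0 \/ l < 0 \/ j < 0 -> zero_ext f a l j = 0.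
Proof. by case: a => a; case: l => l; case: j => j //; lia. Qed.

Lemma deltaz_neq0 a l j : a != 0 -> deltaz a l j = 0.
Proof. by case: a => [[|a]|a] //= _; case: l => l; case: j. Qed.

Lemma exactz_le0 a l j : a <= 0 -> exactz a l j = 0.
Proof. by case: a => [[|a]|a] //= _; case: l => l; case: j. Qed.

Lemma exactz_l_le0 a l j : l <= 0 -> exactz a l j = 0.
Proof. by case: a => a; case: l => [[|l]|l] // _; case: j => j //; case: a. Qed.

Lemma boundedz0 l j : boundedz 0 l j = deltaz 0 l j.
Proof.
by case: l => l; case: j => j //=; rewrite (bounded_count0 l j).
Qed.

Lemma boundedzS a l j :
  0 < a -> boundedz a l j = boundedz (a - 1) l j + exactz a l j.
Proof.
case: a => [[|m]|m] // _; rewrite (_ : m.+1%:Z - 1 = m); last by lia.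
by case: l => l; case: j => j //=; rewrite bounded_countS PoszD.
Qed.

Lemma exactzS a l j : 0 < a ->
  exactz a l j = exactz a (l - 1) j + boundedz (a - 1) (l - 1) (j - evenz a).
Proof.
case: a => [[|m]|m] // _; rewrite (_ : m.+1%:Z - 1 = m); last by lia.
have [l_le0|] := lerP l 0; first by rewrite !exactz_l_le0 /boundedz ?zero_ext_neg; lia.
case: l => [[|l]|l] // _.
rewrite (_ : l.+1%:Z - 1 = l); last by lia.
case: j => j; last first.
  by rewrite /exactz /boundedz ?zero_ext_neg //; have := evenz01 m.+1; lia.
rewrite /exactz /= exact_countS PoszD; congr (_ + _).
rewrite /evenz /=; case: ifP => [odd_m|even_m].
  by rewrite subr0; congr Posz; apply: eq_count => s; rewrite addn0.
case: j => [|j]; last first.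
  rewrite (_ : j.+1%:Z - 1 = j); last by lia.
  by congr Posz; apply: eq_count => s; rewrite addn1.
rewrite (_ : 0%Z - 1 = Negz 0) //.
by rewrite (eq_count (a2 := pred0)) ?count_pred0 // => s; rewrite addn1.
Qed.

Definition mul_den (f : int -> int -> int -> int) (a l j : int) : int :=
  f a l j - 2 * f a (l - 1) j + f a (l - 2) j
  - f (a - 2) l j + f (a - 2) (l - 1) j - f (a - 2) (l - 1) (j - 1).

Definition mul_num (f : int -> int -> int -> int) (a l j : int) : int :=
  f (a - 1) (l - 1) j - f (a - 1) (l - 2) j + f (a - 2) (l - 1) (j - 1).

Lemma evenzB1 a : 0 < a -> evenz (a - 1) = 1 - evenz a.
Proof.
case: a => [[|a]|a] // _; rewrite /evenz (_ : a.+1%:Z - 1 = a); last by lia.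
by rewrite /=; case: (odd a).
Qed.

Lemma boundedz_step a l j : 0 < a ->
  boundedz a l j - boundedz a (l - 1) j =
  boundedz (a - 1) l j - boundedz (a - 1) (l - 1) j
  + boundedz (a - 1) (l - 1) (j - evenz a).
Proof.
move=> a_gt0; have := boundedzS l j a_gt0; have := boundedzS (l - 1) j a_gt0.
have := exactzS l j a_gt0; lia.
Qed.

Lemma mul_den_boundedz a l j : 1 < a -> mul_den boundedz a l j = 0.
Proof.
move=> a_gt1; have a_gt0 : 0 < a by lia.
have a1_gt0 : 0 < a - 1 by lia.
have := boundedz_step l j a_gt0; have := boundedz_step (l - 1) j a_gt0.
have := @boundedz_step (a - 1) l j a1_gt0; have := @boundedz_step (a - 1) (l - 1) j a1_gt0.
have := @boundedz_step (a - 1) (l - 1) (j - 1) a1_gt0.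
rewrite /mul_den evenzB1 // !subz11.
case: (evenz01 a) => ->; rewrite ?subr0 ?subrr ?subz11; abstract_atoms boundedz; lia.
Qed.

Lemma mul_den_exactz_gt2 a l j : 2 < a -> mul_den exactz a l j = 0.
Proof.
move=> a_gt2; have a_gt0 : 0 < a by lia.
have a2_gt0 : 0 < a - 2 by lia.
have := boundedzS l j a_gt0; have := boundedzS (l - 1) j a_gt0.
have := boundedzS (l - 2) j a_gt0; have := @boundedzS (a - 2) l j a2_gt0.
have := @boundedzS (a - 2) (l - 1) j a2_gt0.
have := @boundedzS (a - 2) (l - 1) (j - 1) a2_gt0.
have := @mul_den_boundedz a l j; have := @mul_den_boundedz (a - 1) l j.
rewrite /mul_den !subz12 !subz21.
abstract_atoms boundedz; abstract_atoms exactz; lia.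
Qed.

Lemma mul_den_exactz a l j : mul_den exactz a l j = mul_num deltaz a l j.
Proof.
have [a_le0|a_gt0] := lerP a 0.
  by rewrite /mul_den /mul_num !exactz_le0 ?deltaz_neq0 //; lia.
have [->|a_ne1] := eqVneq a 1.
  have := exactzS l j (@ltr01 int); have := exactzS (l - 1) j (@ltr01 int).
  rewrite /mul_den /mul_num subrr !(@exactz_le0 (1 - 2)) // (@deltaz_neq0 (1 - 2)) //.
  rewrite !boundedz0 (_ : evenz 1 = 0) // subr0 subz11.
  abstract_atoms exactz; abstract_atoms deltaz; lia.
have [->|a_ne2] := eqVneq a 2.
  have two_gt0 : (0 : int) < 2 by [].
  have := exactzS l j two_gt0; have := exactzS (l - 1) j two_gt0.
  have := boundedz_step (l - 1) (j - 1) (@ltr01 int).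
  rewrite /mul_den /mul_num subrr (_ : 2 - 1 = 1 :> int) //.
  rewrite !(@deltaz_neq0 1) // !(@exactz_le0 0) //.
  rewrite !boundedz0 (_ : evenz 1 = 0) // (_ : evenz 2 = 1) // subr0 !subz11.
  abstract_atoms exactz; abstract_atoms boundedz; abstract_atoms deltaz; lia.
by rewrite mul_den_exactz_gt2 /mul_num ?deltaz_neq0; lia.
Qed.

Fixpoint inv_den_fuel (n : nat) (a l j : int) : int :=
  if n is n'.+1 then
    if (a < 0) || (l < 0) || (j < 0) then 0 else
    deltaz a l j + 2 * inv_den_fuel n' a (l - 1) j - inv_den_fuel n' a (l - 2) j
    + inv_den_fuel n' (a - 2) l j - inv_den_fuel n' (a - 2) (l - 1) j
    + inv_den_fuel n' (a - 2) (l - 1) (j - 1)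
  else 0.

(* [`|a + l|.+1] is enough fuel: every recursive call lowers [a + l]. *)
Definition inv_den (a l j : int) : int := inv_den_fuel `|a + l|.+1 a l j.

Lemma inv_den_fuel_neg n a l j :
  a < 0 \/ l < 0 \/ j < 0 -> inv_den_fuel n a l j = 0.
Proof. by case: n => //= n neg; case: ifP => //; lia. Qed.

Lemma inv_den_fuel_stable n n' a l j :
  a + l < n%:Z -> a + l < n'%:Z -> inv_den_fuel n a l j = inv_den_fuel n' a l j.
Proof.
elim: n n' a l j => [|n IH] n' a l j lt_n lt_n'.
  by rewrite !inv_den_fuel_neg //; lia.
case: n' lt_n' => [|n'] lt_n'; first by rewrite !inv_den_fuel_neg //; lia.
rewrite /=; case: ifP => // /negbT; rewrite !negb_or -!leNgt => /andP [/andP [a_ge0 l_ge0] _].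
by rewrite !(IH n') //; lia.
Qed.

Lemma inv_den_fuelE n a l j : a + l < n%:Z -> inv_den_fuel n a l j = inv_den a l j.
Proof.
move=> lt_n; have [neg|[a_ge0 l_ge0]] : (a < 0 \/ l < 0) \/ (0 <= a /\ 0 <= l) by lia.
  by rewrite /inv_den !inv_den_fuel_neg //; lia.
by apply: inv_den_fuel_stable => //; lia.
Qed.

Lemma inv_den_neg a l j : a < 0 \/ l < 0 \/ j < 0 -> inv_den a l j = 0.
Proof. exact: inv_den_fuel_neg. Qed.

Lemma mul_den_inv_den a l j : mul_den inv_den a l j = deltaz a l j.
Proof.
have [neg|[a_ge0 [l_ge0 j_ge0]]] : (a < 0 \/ l < 0 \/ j < 0) \/ (0 <= a /\ 0 <= l /\ 0 <= j) by lia.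
  by rewrite /mul_den /deltaz !inv_den_neg ?zero_ext_neg; lia.
rewrite /mul_den {1}/inv_den /=; case: ifP => [|_]; first by lia.
by rewrite !inv_den_fuelE; lia.
Qed.

Lemma mul_den_inj f g :
  (forall a l j, a < 0 \/ l < 0 -> f a l j = 0) ->
  (forall a l j, a < 0 \/ l < 0 -> g a l j = 0) ->
  (forall a l j, mul_den f a l j = mul_den g a l j) ->
  forall a l j, f a l j = g a l j.
Proof.
move=> f_neg g_neg eq_fg; suff fg n a l j : a + l < n%:Z -> f a l j = g a l j.
  by move=> a l j; apply: (fg `|a + l|.+1); lia.
elim: n a l j => [|n IH] a l j lt_n.
  by rewrite f_neg ?g_neg //; lia.
have [neg|[a_ge0 l_ge0]] : (a < 0 \/ l < 0) \/ (0 <= a /\ 0 <= l) by lia.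
  by rewrite f_neg ?g_neg.
have := eq_fg a l j; rewrite /mul_den (IH a (l - 1)) ?(IH a (l - 2)) ?(IH (a - 2) l)
  ?(IH (a - 2) (l - 1) j) ?(IH (a - 2) (l - 1) (j - 1)); try lia.
abstract_atoms f; abstract_atoms g; lia.
Qed.

Lemma mul_den_mul_num f a l j : mul_den (mul_num f) a l j = mul_num (mul_den f) a l j.
Proof.
rewrite /mul_den /mul_num !subz11 !subz12 !subz21 !subz22.
abstract_atoms f; lia.
Qed.

Lemma fps_ext (f g : fps) : (forall a b c d, f a b c d = g a b c d) -> f = g.
Proof.
move=> eq_fg; do 4![apply: functional_extensionality => ?]; exact: eq_fg.
Qed.

Lemma fps_mulDl f g h : fps_mul (fps_add f g) h = fps_add (fps_mul f h) (fps_mul g h).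
Proof.
apply: fps_ext => a b c d; rewrite /fps_mul /fps_add -big_split.
apply: eq_bigr => i _; rewrite -big_split; apply: eq_bigr => k _.
rewrite -big_split; apply: eq_bigr => m _; rewrite -big_split; apply: eq_bigr => p _.
exact: mulrDl.
Qed.

Lemma sum_ord_single (n i : nat) (F : 'I_n.+1 -> int) :
  (forall x : 'I_n.+1, x != i :> nat -> F x = 0) ->
  \sum_(x < n.+1) F x = if (i <= n)%N then F (inord i) else 0.
Proof.
move=> F_single; case: leqP => [i_le_n|n_lt_i].
  rewrite (bigD1 (inord i)) //= big1 ?addr0 // => x x_i; apply: F_single.
  by apply: contraNneq x_i => x_eq_i; apply/eqP/val_inj; rewrite /= inordK.
by rewrite big1 // => x _; apply: F_single; rewrite neq_ltn (leq_trans (ltn_ord x)).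
Qed.

Lemma fps_mul_mono e i k m p g a b c d :
  fps_mul (mono e i k m p) g a b c d =
  if [&& i <= a, k <= b, m <= c & p <= d]%N
  then e * g (a - i)%N (b - k)%N (c - m)%N (d - p)%N else 0.
Proof.
rewrite /fps_mul /mono (@sum_ord_single a i) => [|x /negbTE x_i]; last first.
  by rewrite big1 // => y _; rewrite big1 // => z _; rewrite big1 // => w _; rewrite x_i mul0r.
case: (leqP i a) => //= i_le_a; rewrite inordK // (@sum_ord_single b k) => [|y /negbTE y_k]; last first.
  by rewrite big1 // => z _; rewrite big1 // => w _; rewrite eqxx y_k mul0r.
case: (leqP k b) => //= k_le_b; rewrite inordK // (@sum_ord_single c m) => [|z /negbTE z_m]; last first.
  by rewrite big1 // => w _; rewrite !eqxx z_m mul0r.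
case: (leqP m c) => //= m_le_c; rewrite inordK // (@sum_ord_single d p) => [|w /negbTE w_p]; last first.
  by rewrite !eqxx w_p mul0r.
by case: (leqP p d) => //= p_le_d; rewrite inordK // !eqxx.
Qed.

Definition lift_fps (o : nat) (F : int -> int -> int -> int) : fps :=
  fun a l j n => if (n + o == a + l)%N then F a l j else 0.

Lemma fps_mul_mono_lift e i k m p o F :
  (forall a l j, a < 0 \/ l < 0 \/ j < 0 -> F a l j = 0) -> (p + o = i + k)%N ->
  fps_mul (mono e i k m p) (lift_fps 0 F) =
  lift_fps o (fun a l j => e * F (a - i%:Z) (l - k%:Z) (j - m%:Z)).
Proof.
move=> F_neg p_o; apply: fps_ext => a l j n; rewrite fps_mul_mono /lift_fps.
case: ifP => [/and4P [i_a k_l m_j p_n]|/negbT].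
  rewrite !subzn // addn0 (_ : (n - p == a - i + (l - k))%N = (n + o == a + l)%N).
    by case: ifP; rewrite ?mulr0.
  by apply/eqP/eqP; lia.
rewrite !negb_and -!ltnNge => out; case: eqP => // n_o.
by rewrite F_neg ?mulr0 //; lia.
Qed.

Lemma lift_fps_add o F G :
  fps_add (lift_fps o F) (lift_fps o G) = lift_fps o (fun a l j => F a l j + G a l j).
Proof. by apply: fps_ext => a l j n; rewrite /fps_add /lift_fps; case: ifP; rewrite ?addr0. Qed.

Lemma lift_fps_ext o F G : (forall a l j, F a l j = G a l j) -> lift_fps o F = lift_fps o G.
Proof. by move=> eq_FG; apply: fps_ext => a l j n; rewrite /lift_fps eq_FG. Qed.

Section LiftedProducts.

Variable D : int -> int -> int -> int.
Hypothesis D_neg : forall a l j, a < 0 \/ l < 0 \/ j < 0 -> D a l j = 0.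

Lemma fps_mul_den : fps_mul den_FO2 (lift_fps 0 D) = lift_fps 0 (mul_den D).
Proof.
rewrite /den_FO2 !fps_mulDl !(@fps_mul_mono_lift _ _ _ _ _ 0 D D_neg) // !lift_fps_add.
by apply: lift_fps_ext => a l j; rewrite /mul_den !subr0; abstract_atoms D; lia.
Qed.

Lemma fps_mul_num : fps_mul num_FO2 (lift_fps 0 D) = lift_fps 1 (mul_num D).
Proof.
rewrite /num_FO2 !fps_mulDl !(@fps_mul_mono_lift _ _ _ _ _ 1 D D_neg) // !lift_fps_add.
by apply: lift_fps_ext => a l j; rewrite /mul_num !subr0; abstract_atoms D; lia.
Qed.

End LiftedProducts.

Lemma fps_one_lift : fps_one = lift_fps 0 deltaz.
Proof.
apply: fps_ext => a l j n; rewrite /fps_one /mono /lift_fps addn0.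
by case: a => [|a]; case: l => [|l]; case: j => [|j]; case: n => [|n]; rewrite /= ?if_same.
Qed.

Lemma FO2_gf_lift : FO2_gf = lift_fps 1 exactz.
Proof.
apply: fps_ext => a l j n; rewrite /FO2_gf /lift_fps.
case: a => [|a]; first by case: ifP.
case: l => [|l]; first by rewrite /exactz /= /exact_count; case: ifP.
case: n => [|n] /=; first by case: ifP => // /eqP; lia.
by rewrite FO2_exact_count addn1 addSn eqSS; case: ifP.
Qed.

Lemma exactz_mul_num_inv_den a l j : exactz a l j = mul_num inv_den a l j.
Proof.
apply: mul_den_inj => {a l j} [a l j neg|a l j neg|a l j].
- by apply: zero_ext_neg; lia.
- by rewrite /mul_num !inv_den_neg; lia.
by rewrite mul_den_exactz mul_den_mul_num /mul_num !mul_den_inv_den.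
Qed.

Theorem mainTheorem3 :
  exists den_inv : fps,
    fps_mul den_FO2 den_inv = fps_one /\
    FO2_gf = fps_mul num_FO2 den_inv.
Proof.
exists (lift_fps 0 inv_den).
rewrite (fps_mul_den inv_den_neg) (fps_mul_num inv_den_neg); split; first by rewrite fps_one_lift; apply: lift_fps_ext; exact: mul_den_inv_den.
by rewrite FO2_gf_lift; apply: lift_fps_ext; exact: exactz_mul_num_inv_den.
Qed.
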